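(* Let $(V,c)$ be a network satisfying the Yang-type inequality with constant $C_{YT}$. Let $\Omega\subset V$ be finite with Dirichlet eigenvalues $\lambda_1\le\cdots\le\lambda_{|\Omega|}$, and let $1\le k<|\Omega|$. If $\lambda_k\le1-\delta$ for some $\delta>0$, then $$\lambda_{k+1}-\lambda_{\min}\le(1+\theta)\,k^{\theta/2}(\lambda_1-\lambda_{\min}),\qquad\text{where }\theta=\frac{C_{YT}}{\delta}.$$
   Context: A network is a pair $(V,c)$ with $V$ countable and $c:V\times V\to[0,\infty)$ symmetric with $\pi(x)=\sum_yc(x,y)<\infty$; $P(x,y)=c(x,y)/\pi(x)$ and $\Delta f(x)=\sum_yP(x,y)(f(x)-f(y))$, a bounded self-adjoint operator on $L^2(V,\pi)$ (inner product $\sum_x\pi(x)f(x)\overline{g(x)}$) with spectrum in $[0,2]$; $\lambda_{\min}$ is the bottom of its spectrum. For finite $\Omega\subset V$, the Dirichlet eigenvalues $\lambda_1\le\cdots\le\lambda_{|\Omega|}$ of $\Omega$ are the eigenvalues (with multiplicity) of the compression $\Delta_\Omega f=\mathbf 1_\Omega\cdot\Delta f$ on functions vanishing outside $\Omega$. The network satisfies the Yang-type inequality with constant $C_{YT}$ if for every finite $\Omega\subset V$ and every $k<|\Omega|$: $\sum_{i=1}^k(\lambda_{k+1}-\lambda_i)^2(1-\lambda_i)\le C_{YT}\sum_{i=1}^k(\lambda_{k+1}-\lambda_i)(\lambda_i-\lambda_{\min})$. *)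

From HB Require Import structures.
From mathcomp Require Import all_boot all_order all_algebra.
From mathcomp Require Import all_classical all_reals all_analysis.
Set Implicit Arguments. Unset Strict Implicit. Unset Printing Implicit Defensive.
Import Order.TTheory GRing.Theory Num.Theory.
Local Open Scope classical_set_scope.
Local Open Scope ring_scope.

Section Network.
Variables (R : realType) (V : countType).
Implicit Types (c : V -> V -> R).

Definition pi_w c (x : V) : R := fine (\esum_(y in [set: V]) (c x y)%:E).

(* (V,c) is a network: c >= 0, symmetric, pi(x) finite (and positive so that
   P = c/pi is defined). *)
Definition is_network c : Prop :=
  [/\ (forall x y, 0 <= c x y),
      (forall x y, c x y = c y x),
      (forall x, (\esum_(y in [set: V]) (c x y)%:E < +oo)%E) &
      (forall x, 0 < pi_w c x)].

Definition transP c (x y : V) : R := c x y / pi_w c x.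

(* Matrix of the compression Delta_Omega on functions vanishing outside Omega
   (Omega given as a duplicate-free list): (Delta_Omega f)(x) = f x - sum_{y in Omega} P(x,y) f y. *)
Definition dir_mx c (Om : seq V) : 'M[R]_(size Om) :=
  \matrix_(i, j) ((i == j)%:R - transP c (tnth (in_tuple Om) i) (tnth (in_tuple Om) j)).

Definition dirichlet_eigs c (Om : seq V) (lam : seq R) : Prop :=
  sorted <=%R lam /\ char_poly (dir_mx c Om) = \prod_(l <- lam) ('X - l%:P).

(* Rayleigh quotient <Delta f, f>_pi / <f, f>_pi of the finitely supported
   function equal to f on S (S duplicate-free) and 0 outside S. *)
Definition rq_num c (S : seq V) (f : V -> R) : R :=
  \sum_(x <- S) pi_w c x * f x * (f x - \sum_(y <- S) transP c x y * f y).
Definition rq_den c (S : seq V) (f : V -> R) : R :=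
  \sum_(x <- S) pi_w c x * f x ^+ 2.

(* bottom of the spectrum of Delta on L^2(V,pi), via the variational principle
   over the dense subspace of finitely supported functions *)
Definition lambda_min c : R :=
  inf [set r | exists (S : seq V) (f : V -> R),
         [/\ uniq S, 0 < rq_den c S f & r = rq_num c S f / rq_den c S f]].

Definition yang_type c (C : R) : Prop :=
  forall (Om : seq V) (lam : seq R), uniq Om -> dirichlet_eigs c Om lam ->
  forall k : nat, (k < size Om)%N ->
    \sum_(i < k) (lam`_k - lam`_i) ^+ 2 * (1 - lam`_i)
      <= C * \sum_(i < k) (lam`_k - lam`_i) * (lam`_i - lambda_min c).

End Network.

From HB Require Import structures.
From mathcomp Require Import all_boot all_order all_algebra.
From mathcomp Require Import all_classical all_reals all_analysis.
From mathcomp Require Import ring lra.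
Set Implicit Arguments.
Unset Strict Implicit.
Unset Printing Implicit Defensive.

Import Order.TTheory GRing.Theory Num.Theory.
Local Open Scope classical_set_scope.
Local Open Scope ring_scope.

(* Put mu_i = lam_i - lambda_min (0-based, nondecreasing, mu_0 >= 0) and th = C / delta.
   Since 1 - lam_i >= delta for i < k, Yang's inequality yields the recursion
   sum_{i<m} (mu_m - mu_i)^2 <= th sum_{i<m} (mu_m - mu_i) mu_i for 1 <= m <= k,
   i.e. the convex quadratic G_m(z) = sum_{i<m} ((z - mu_i)^2 - th (z - mu_i) mu_i)
   is <= 0 at mu_m, hence on [mu_{m-1}, mu_m].  On that interval G_m <= 0 is exactly
   the condition for Q_m(z) / z^(2 + 2/th) to be nondecreasing, where
   Q_m(z) = sum_{i<m} (z - mu_i)^2; gluing the intervals, this ratio grows from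
   z = (1 + th) mu_0 to z = mu_k.  At the left end Q >= (th mu_0)^2, at the right end
   G_k(mu_k) <= 0 and Cauchy-Schwarz give (1 + th)^2 Q <= k (th mu_k)^2, and comparing
   yields mu_k <= (1 + th) k^(th/2) mu_0.
   If C < 0, Yang's inequality on two-point sets forces c(x, y) = 0 for x <> y and a
   constant diagonal of P, so all Rayleigh quotients, hence all Dirichlet eigenvalues
   and lambda_min, coincide. *)

Lemma sqr_sum_le (R : realFieldType) n (a : 'I_n -> R) :
  (\sum_i a i) ^+ 2 <= n%:R * \sum_i a i ^+ 2.
Proof.
set S := \sum_i a i; set Q := \sum_i a i ^+ 2.
have sq_split : \sum_i \sum_j (a i ^+ 2 + a j ^+ 2) = (n%:R * Q) *+ 2.
  under eq_bigr do rewrite big_split /= sumr_const card_ord -/Q.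
  by rewrite big_split /= sumr_const card_ord sumrMnl -/Q -mulr_natl; ring.
have cross : \sum_i \sum_j a i * a j = S ^+ 2 by rewrite expr2 big_distrlr.
have : 0 <= \sum_i \sum_j (a i - a j) ^+ 2.
  by apply: sumr_ge0 => i _; apply: sumr_ge0 => j _; exact: sqr_ge0.
have -> : \sum_i \sum_j (a i - a j) ^+ 2 = (n%:R * Q - S ^+ 2) *+ 2.
  rewrite mulrnBl -sq_split -cross -sumrMnl -sumrB; apply: eq_bigr => i _.
  by rewrite -sumrMnl -sumrB; apply: eq_bigr => j _; ring.
by rewrite pmulrn_lge0 // subr_ge0.
Qed.

Lemma powR_ge1 (R : realType) (a r : R) : 1 <= a -> 0 <= r -> 1 <= a `^ r.
Proof. by move=> a1 r0; rewrite -(powRr0 a) ler_powR. Qed.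

Lemma XsubC_mul_subC_factor (R : rcfType) (a d q : R) :
  0 <= (a - d) ^+ 2 + 4 * q ->
  let s := Num.sqrt ((a - d) ^+ 2 + 4 * q) in
  ('X - a%:P) * ('X - d%:P) - q%:P
    = ('X - ((a + d - s) / 2)%:P) * ('X - ((a + d + s) / 2)%:P) :> {poly R}.
Proof.
move=> D0 s; have ss : s ^+ 2 = (a - d) ^+ 2 + 4 * q by rewrite sqr_sqrtr.
set r1 := (a + d - s) / 2; set r2 := (a + d + s) / 2.
have sum_r : r1 + r2 = a + d by rewrite /r1 /r2; field.
have prod_r : r1 * r2 = a * d - q.
  have -> : r1 * r2 = ((a + d) ^+ 2 - s ^+ 2) / 4 by rewrite /r1 /r2; field.
  by rewrite ss; field.
have -> : ('X - r1%:P) * ('X - r2%:P) = 'X * 'X - (r1 + r2)%:P * 'X + (r1 * r2)%:P.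
  by rewrite (polyCD r1 r2) (polyCM r1 r2); ring.
by rewrite sum_r prod_r (polyCD a d) (polyCB (a * d) q) (polyCM a d); ring.
Qed.

Lemma char_poly_trmx (R : comNzRingType) n (A : 'M[R]_n) : char_poly A^T = char_poly A.
Proof.
rewrite /char_poly -det_tr; congr (\det _); apply/matrixP => i j.
by rewrite !mxE eq_sym.
Qed.

Section ChengYang.
Variables (R : realType) (mu : nat -> R) (th : R).

Definition sumsq m z := \sum_(i < m) (z - mu i) ^+ 2.
Definition sumdev m z := \sum_(i < m) (z - mu i).
Definition yangf m z := \sum_(i < m) ((z - mu i) ^+ 2 - th * ((z - mu i) * mu i)).

Lemma yangfE m z : yangf m z = (1 + th) * sumsq m z - th * z * sumdev m z.
Proof. by rewrite /yangf /sumsq /sumdev !mulr_sumr -sumrB; apply: eq_bigr => i _; ring. Qed.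

Lemma yangfS m z :
  yangf m.+1 z = yangf m z + ((z - mu m) ^+ 2 - th * ((z - mu m) * mu m)).
Proof. by rewrite /yangf big_ord_recr. Qed.

Lemma is_derive_sumsq m (z : R) : is_derive z 1 (sumsq m) (2 * sumdev m z).
Proof.
have -> : sumsq m = \sum_(i < m) (fun z => (z - mu i) ^+ 2).
  by apply/funext => x; rewrite fct_sumE.
rewrite /sumdev mulr_sumr; apply: is_derive_sum => i.
by apply: is_derive_eq; rewrite subr0 /GRing.scale /=; ring.
Qed.

Lemma sumsq_gt0 m z : (0 < m)%N -> mu 0 < z -> 0 < sumsq m z.
Proof.
case: m => [//|m] _ z0; rewrite /sumsq big_ord_recl ltr_pwDl //.
  by rewrite exprn_gt0 // subr_gt0.
by apply: sumr_ge0 => i _; exact: sqr_ge0.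
Qed.

(* [yangf m] is a quadratic polynomial with leading coefficient [m], hence convex. *)
Lemma yangf_le0_between m a b z :
  yangf m a <= 0 -> yangf m b <= 0 -> a <= z <= b -> yangf m z <= 0.
Proof.
move=> Ga Gb /andP[az zb]; have [ab|] := ltP a b; last first.
  by move=> ba; have -> : z = a by apply/le_anti; rewrite az (le_trans zb).
have secant : (b - a) * yangf m z = (b - z) * yangf m a + (z - a) * yangf m b
    + m%:R * ((b - a) * (z - a) * (z - b)).
  rewrite /yangf !mulr_sumr mulr_natl -[in _ *+ m](card_ord m) -sumr_const.
  by rewrite -!big_split; apply: eq_bigr => i _ /=; ring.
have ta : (b - z) * yangf m a <= 0 by rewrite mulr_ge0_le0 // subr_ge0.
have tb : (z - a) * yangf m b <= 0 by rewrite mulr_ge0_le0 // subr_ge0.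
have tm : m%:R * ((b - a) * (z - a) * (z - b)) <= 0.
  apply: mulr_ge0_le0; first exact: ler0n.
  by apply: mulr_ge0_le0; [rewrite mulr_ge0 ?subr_ge0 ?(ltW ab) | rewrite subr_le0].
by rewrite -(pmulr_rle0 _ (_ : 0 < b - a)) ?subr_gt0 // secant; lra.
Qed.

Lemma yangf_le0_sumsq m z : 0 <= th -> yangf m z <= 0 ->
  (1 + th) ^+ 2 * sumsq m z <= (th * z) ^+ 2 * m%:R.
Proof.
move=> th0; rewrite yangfE subr_le0; set Q := sumsq m z => G.
have Q0 : 0 <= Q by apply: sumr_ge0 => i _; exact: sqr_ge0.
have [->|Qpos] := eqVneq Q 0; first by rewrite mulr0 mulr_ge0 ?sqr_ge0.
have {}Qpos : 0 < Q by rewrite lt_def Qpos.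
rewrite -(ler_pM2r Qpos) -mulrA -expr2 -exprMn -mulrA.
apply: le_trans (_ : (th * z * sumdev m z) ^+ 2 <= _).
  by rewrite ler_pXn2r // nnegrE ?(le_trans _ G) ?mulr_ge0 // addr_ge0.
by rewrite exprMn ler_wpM2l ?sqr_ge0 // sqr_sum_le.
Qed.

Variable k : nat.
Hypothesis mu_ndecr : forall i j, (i <= j <= k)%N -> mu i <= mu j.
Hypothesis yang_rec : forall m, (1 <= m <= k)%N ->
  \sum_(i < m) (mu m - mu i) ^+ 2 <= th * \sum_(i < m) (mu m - mu i) * mu i.

Lemma yangf_mu_le0 m : (m <= k)%N -> yangf m (mu m) <= 0.
Proof.
case: m => [_|m mk]; first by rewrite /yangf big_ord0.
by rewrite /yangf sumrB -mulr_sumr subr_le0 yang_rec.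
Qed.

Lemma yangf_le0 m z : (1 <= m <= k)%N -> mu m.-1 <= z <= mu m -> yangf m z <= 0.
Proof.
case: m => [//|m] /andP[_ mk] /=; apply: yangf_le0_between.
  by rewrite yangfS subrr expr0n mul0r mulr0 subr0 addr0 yangf_mu_le0 // ltnW.
exact: yangf_mu_le0.
Qed.

Hypothesis th_gt0 : 0 < th.
Hypothesis mu0_gt0 : 0 < mu 0.

Let p := 2 + 2 / th.

Definition psi m z := ln (sumsq m z) - p * ln z.

(* The exponent [p] is what makes the derivative a negative multiple of [yangf m]. *)
Lemma is_derive_psi m (z : R) : 0 < z -> 0 < sumsq m z ->
  is_derive z 1 (psi m) (- 2 * yangf m z / (th * z * sumsq m z)).
Proof.
move=> z0 Q0.
have dlnQ := is_derive1_comp (is_derive1_ln Q0) (is_derive_sumsq m z).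
have := is_deriveB dlnQ (is_deriveZ p (is_derive1_ln z0)).
have -> : (@ln R \o sumsq m) - p \*: @ln R = psi m by apply/funext.
move=> /is_derive_eq; apply; rewrite yangfE /GRing.scale /= /p; field.
by rewrite !gt_eqF.
Qed.

Lemma psi_ndecr m x y : (1 <= m <= k)%N -> mu 0 < x ->
  mu m.-1 <= x -> x <= y -> y <= mu m -> psi m x <= psi m y.
Proof.
move=> mk x0 mx xy ym; have m0 : (0 < m)%N by case/andP: mk.
have D t : x <= t -> is_derive t 1 (psi m) (- 2 * yangf m t / (th * t * sumsq m t)).
  move=> xt; have t0 : mu 0 < t by exact: lt_le_trans xt.
  by apply: is_derive_psi; [exact: lt_trans t0 | exact: sumsq_gt0].
have D' : {in `[x, y], forall t, derivable (psi m) t 1}.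
  by move=> t; rewrite in_itv /= => /andP[/D []].
apply: (@ger0_derive1_ndecr R (psi m) x y) => //.
- by move=> t /[1!in_itv] /andP[xt ty]; apply: D'; rewrite in_itv /= !ltW.
- move=> t /[1!in_itv] /andP[xt ty]; have t0 : mu 0 < t by exact: lt_trans xt.
  have Dt := D t (ltW xt); rewrite derive1E derive_val !mulNr oppr_ge0.
  have tQ : 0 < th * t * sumsq m t.
    by rewrite !mulr_gt0 ?sumsq_gt0 // (lt_trans mu0_gt0).
  rewrite pmulr_lle0 ?invr_gt0 // pmulr_rle0 //; apply: yangf_le0 => //.
  by rewrite (le_trans mx (ltW xt)) (le_trans (ltW ty) ym).
- exact: derivable_within_continuous.
Qed.

Definition sumsq_below z := \sum_(i < k) (if mu i <= z then (z - mu i) ^+ 2 else 0).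

Lemma sumsq_belowE m z : (1 <= m <= k)%N -> mu m.-1 <= z <= mu m ->
  sumsq_below z = sumsq m z.
Proof.
move=> /andP[m1 mk] /andP[mz zm].
rewrite /sumsq_below /sumsq (big_ord_widen k (fun i => (z - mu i) ^+ 2) mk).
rewrite (bigID (fun i : 'I_k => (i < m)%N)) /= [X in _ + X]big1 ?addr0; last first.
  move=> i; rewrite -leqNgt => mi; case: ifP => // iz.
  have mu_mi : mu m <= mu i by apply: mu_ndecr; rewrite mi ltnW.
  have -> : z = mu i by apply/le_anti; rewrite iz (le_trans zm mu_mi).
  by rewrite subrr expr0n.
apply: eq_bigr => i im; rewrite ifT // (le_trans _ mz) // mu_ndecr //.
by rewrite -ltnS prednK // im (leq_trans (leq_pred m) mk).
Qed.

Definition psi_below z := ln (sumsq_below z) - p * ln z.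

Lemma psi_below_ndecr m x y : (m <= k)%N -> mu 0 < x -> x <= y -> y <= mu m ->
  psi_below x <= psi_below y.
Proof.
elim: m x y => [|m IH] x y mk x0 xy ym.
  by have := lt_le_trans x0 (le_trans xy ym); rewrite ltxx.
have piece u v : mu m <= u -> u <= v -> v <= mu m.+1 -> mu 0 < u ->
    psi_below u <= psi_below v.
  move=> mu_u uv vm u0; rewrite /psi_below !(@sumsq_belowE m.+1) ?mk //=.
  - exact: psi_ndecr.
  - by rewrite (le_trans mu_u uv).
  - by rewrite mu_u (le_trans uv).
have [ym'|ym'] := leP y (mu m); first exact: IH (ltnW mk) x0 xy ym'.
have [xm|xm] := leP (mu m) x; first exact: piece.
apply: le_trans (IH x (mu m) (ltnW mk) x0 (ltW xm) (lexx _)) _.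
by apply: piece => //; [exact: ltW | exact: lt_trans xm].
Qed.

Lemma sumsq_below_ge z : (1 <= k)%N -> mu 0 <= z -> (z - mu 0) ^+ 2 <= sumsq_below z.
Proof.
move=> k1 z0; rewrite /sumsq_below; case: (k) k1 => [//|n] _.
rewrite big_ord_recl ifT // lerDl.
by apply: sumr_ge0 => i _; case: ifP => // _; exact: sqr_ge0.
Qed.

Lemma sumsq_below_mu : (1 <= k)%N -> sumsq_below (mu k) = sumsq k (mu k).
Proof.
move=> k1; apply: sumsq_belowE; first exact/andP.
by apply/andP; split; [apply: mu_ndecr; rewrite leq_pred /= | ].
Qed.

Lemma cheng_yang_pos : (1 <= k)%N -> mu k <= (1 + th) * (k%:R `^ (th / 2)) * mu 0.
Proof.
move=> k1; set z0 := (1 + th) * mu 0; set M := mu k.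
have pow_ge1 : 1 <= (k%:R : R) `^ (th / 2).
  by rewrite powR_ge1 ?ler1n // divr_ge0 // ltW.
have z0_gt : mu 0 < z0 by rewrite /z0 mulrDl mul1r ltrDl mulr_gt0.
have [Mz0|z0M] := leP M z0.
  by rewrite mulrAC (le_trans Mz0) // ler_peMr // ltW // (lt_trans mu0_gt0 z0_gt).
have M0 : 0 < M by rewrite (lt_trans mu0_gt0) // (lt_trans z0_gt).
have mono := psi_below_ndecr (leqnn k) z0_gt (ltW z0M) (lexx M).
have lb : (th * mu 0) ^+ 2 <= sumsq_below z0.
  by rewrite (_ : th * mu 0 = z0 - mu 0) ?sumsq_below_ge ?ltW // /z0; ring.
have ub := yangf_le0_sumsq (ltW th_gt0) (yangf_mu_le0 (leqnn k)).
rewrite -(sumsq_below_mu k1) -/M in ub.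
have Q0 : 0 < sumsq_below M by rewrite (sumsq_below_mu k1) sumsq_gt0 // (lt_trans z0_gt).
have th1 : 0 < 1 + th by rewrite addr_gt0.
have k0 : 0 < (k%:R : R) by rewrite ltr0n.
have Sz0 : 0 < sumsq_below z0 by apply: lt_le_trans lb; rewrite exprn_gt0 ?mulr_gt0.
have ln_lb : (ln th + ln (mu 0)) *+ 2 <= ln (sumsq_below z0).
  move: lb; rewrite -ler_ln ?posrE ?exprn_gt0 ?mulr_gt0 //.
  by rewrite lnXn ?mulr_gt0 // lnM.
have ln_ub : ln (1 + th) *+ 2 + ln (sumsq_below M) <= (ln th + ln M) *+ 2 + ln k%:R.
  move: ub; rewrite -ler_ln ?posrE ?mulr_gt0 ?exprn_gt0 ?mulr_gt0 //.
  by rewrite !lnM ?posrE ?exprn_gt0 ?mulr_gt0 // !lnXn ?mulr_gt0 // lnM.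
have ln_z0 : ln z0 = ln (1 + th) + ln (mu 0) by rewrite lnM.
rewrite -ler_ln ?posrE ?mulr_gt0 ?powR_gt0 // !lnM ?posrE ?mulr_gt0 ?powR_gt0 //.
rewrite ln_powR; move: mono; rewrite /psi_below ln_z0 /p => mono.
set D := ln M - ln (1 + th) - ln (mu 0).
have : 2 / th * D <= ln k%:R by rewrite /D; lra.
rewrite -(ler_pM2l (_ : 0 < th / 2)) ?divr_gt0 // mulrA.
rewrite (_ : th / 2 * (2 / th) = 1) ?mul1r /D; last by field; rewrite gt_eqF.
lra.
Qed.

End ChengYang.

Lemma yang_rec_const (R : realType) (mu : nat -> R) (th : R) k :
  (forall m, (1 <= m <= k)%N ->
     \sum_(i < m) (mu m - mu i) ^+ 2 <= th * \sum_(i < m) (mu m - mu i) * mu i) ->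
  th * mu 0 = 0 -> forall m, (m <= k)%N -> mu m = mu 0.
Proof.
move=> yang_rec thmu0; elim/ltn_ind => -[//|m] IH mk.
have rhs0 : th * \sum_(i < m.+1) (mu m.+1 - mu i) * mu i = 0.
  rewrite (eq_bigr (fun=> (mu m.+1 - mu 0) * mu 0)) => [|i _]; last first.
    by rewrite (IH i) // (leq_trans (ltnW (ltn_ord i)) mk).
  by rewrite sumr_const mulrnAr mulrCA thmu0 mulr0 mul0rn.
have := yang_rec m.+1 mk; rewrite rhs0 big_ord_recl /= => sum_le0.
have : 0 <= \sum_(i < m) (mu m.+1 - mu (bump 0 i)) ^+ 2.
  by apply: sumr_ge0 => i _; exact: sqr_ge0.
move=> tail_ge0; have sq_le0 : (mu m.+1 - mu 0) ^+ 2 <= 0 by lra.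
by apply/eqP; rewrite -subr_eq0 -sqrf_eq0 eq_le sq_le0 sqr_ge0.
Qed.

Lemma cheng_yang (R : realType) (mu : nat -> R) (th : R) k :
  0 <= th -> 0 <= mu 0 -> (forall i j, (i <= j <= k)%N -> mu i <= mu j) ->
  (forall m, (1 <= m <= k)%N ->
     \sum_(i < m) (mu m - mu i) ^+ 2 <= th * \sum_(i < m) (mu m - mu i) * mu i) ->
  (1 <= k)%N -> mu k <= (1 + th) * (k%:R `^ (th / 2)) * mu 0.
Proof.
move=> th0 mu0 mu_ndecr yang_rec k1.
have [thmu0|] := eqVneq (th * mu 0) 0.
  rewrite (yang_rec_const yang_rec thmu0) // ler_peMl // mulr_ege1 //.
    by rewrite lerDl.
  by rewrite powR_ge1 ?ler1n // divr_ge0.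
rewrite mulf_eq0 negb_or => /andP[thn0 mun0].
by apply: cheng_yang_pos; rewrite // lt_def ?thn0 ?mun0.
Qed.

Section DirichletEigenvalues.
Variables (R : realType) (V : countType) (c : V -> V -> R).

Lemma size_dirichlet_eigs Om lam : dirichlet_eigs c Om lam -> size lam = size Om.
Proof.
case=> _ E; have := size_char_poly (dir_mx c Om).
by rewrite E size_prod_XsubC => -[].
Qed.

Lemma root_dirichlet_eigs Om lam i : dirichlet_eigs c Om lam ->
  (i < size Om)%N -> root (char_poly (dir_mx c Om)) lam`_i.
Proof.
move=> eg iO; have sl := size_dirichlet_eigs eg; case: eg => _ ->.
by rewrite root_prod_XsubC mem_nth // sl.
Qed.

Lemma dirichlet_eigs_ndecr Om lam i j : dirichlet_eigs c Om lam ->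
  (i <= j)%N -> (j < size Om)%N -> lam`_i <= lam`_j.
Proof.
move=> eg ij jO; have sl := size_dirichlet_eigs eg.
apply: (sorted_leq_nth le_trans lexx 0 eg.1) => //; rewrite inE sl //.
exact: leq_ltn_trans jO.
Qed.

Lemma yang_type_rec (C : R) Om lam k delta : yang_type c C ->
  uniq Om -> dirichlet_eigs c Om lam -> (k < size Om)%N ->
  0 < delta -> lam`_k.-1 <= 1 - delta -> forall m, (1 <= m <= k)%N ->
  \sum_(i < m) (lam`_m - lam`_i) ^+ 2
    <= C / delta * \sum_(i < m) (lam`_m - lam`_i) * (lam`_i - lambda_min c).
Proof.
move=> Y uOm eg kO d0 lam_k1 m /andP[m1 mk].
rewrite -(ler_pM2l d0) mulrA mulrCA divff ?gt_eqF // mulr1.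
apply: le_trans (Y _ _ uOm eg _ (leq_ltn_trans mk kO)); rewrite mulr_sumr.
apply: ler_sum => i _; rewrite mulrC ler_wpM2l ?sqr_ge0 // lerBrDl -lerBrDr.
apply: le_trans lam_k1; apply: (dirichlet_eigs_ndecr eg); last first.
  by rewrite (leq_ltn_trans (leq_pred k)).
by rewrite -ltnS prednK ?(leq_trans (ltn_ord i)) // (leq_trans m1).
Qed.

Hypothesis net : is_network c.

Lemma c_ge0 x y : 0 <= c x y. Proof. by case: net. Qed.
Lemma c_sym x y : c x y = c y x. Proof. by case: net. Qed.
Lemma pi_w_gt0 x : 0 < pi_w c x. Proof. by case: net. Qed.

Lemma pi_w_transP x y : pi_w c x * transP c x y = c x y.
Proof. by rewrite /transP mulrC divfK // gt_eqF // pi_w_gt0. Qed.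

Lemma transP_ge0 x y : 0 <= transP c x y.
Proof. by rewrite /transP divr_ge0 ?c_ge0 // ltW // pi_w_gt0. Qed.

Lemma sum_c_le_pi_w x (S : seq V) : uniq S -> \sum_(y <- S) c x y <= pi_w c x.
Proof.
move=> uS; have fin : (\esum_(y in [set: V]) (c x y)%:E)%E \is a fin_num.
  case: net => _ _ lt _; rewrite ge0_fin_numE ?lt //.
  by apply: esum_ge0 => y _; rewrite lee_fin c_ge0.
rewrite -lee_fin /pi_w fineK // -(@sumEFin R _ S xpredT) (fsbig_seq _ _ uS).
by apply: esum_ge; exists [set` S] => //; split => //; exact: finite_seq.
Qed.

(* [rq_num] is [sum_x pi_x f_x^2 - sum_{x,y} c_xy f_x f_y]; use
   [2 c_xy f_x f_y <= c_xy (f_x^2 + f_y^2)], symmetry of [c] and [sum_y c_xy <= pi_x]. *)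
Lemma rq_num_ge0 (S : seq V) (f : V -> R) : uniq S -> 0 <= rq_num c S f.
Proof.
move=> uS.
have -> : rq_num c S f = \sum_(x <- S) pi_w c x * f x ^+ 2
    - \sum_(x <- S) \sum_(y <- S) c x y * f x * f y.
  rewrite /rq_num -sumrB; apply: eq_bigr => x _; rewrite mulrBr mulr_sumr expr2 mulrA.
  by congr (_ - _); apply: eq_bigr => y _; rewrite -(pi_w_transP x y); ring.
set A := \sum_(x <- S) \sum_(y <- S) c x y * f x ^+ 2.
have cross : (\sum_(x <- S) \sum_(y <- S) c x y * f x * f y) *+ 2 <= A *+ 2.
  rewrite [in X in _ <= X]mulr2n [X in _ + X]exchange_big -big_split -sumrMnl /=.
  apply: ler_sum => x _; rewrite -big_split -sumrMnl /=; apply: ler_sum => y _.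
  rewrite c_sym -subr_ge0.
  have -> : c y x * f x ^+ 2 + c y x * f y ^+ 2 - (c y x * f x * f y) *+ 2
      = c y x * (f x - f y) ^+ 2 by rewrite mulr2n; ring.
  by rewrite mulr_ge0 ?c_ge0 ?sqr_ge0.
have diag : A <= \sum_(x <- S) pi_w c x * f x ^+ 2.
  apply: ler_sum => x _; rewrite -mulr_suml mulrC [X in _ <= X]mulrC.
  by rewrite ler_wpM2l ?sqr_ge0 ?sum_c_le_pi_w.
rewrite subr_ge0; apply: le_trans diag; by rewrite -(ler_pMn2r (_ : 0 < 2)%N).
Qed.

Definition rayleigh_quotients : set R :=
  [set r | exists (S : seq V) (f : V -> R),
     [/\ uniq S, 0 < rq_den c S f & r = rq_num c S f / rq_den c S f]].

Lemma lambda_minE : lambda_min c = inf rayleigh_quotients.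
Proof. by []. Qed.

(* [eigenvalue] is about left eigenvectors [v *m A = l *: v], hence the transpose;
   the eigenvector, read as a function on [Om], has Rayleigh quotient [l]. *)
Lemma root_dir_rayleigh (Om : seq V) (l : R) : uniq Om ->
  root (char_poly (dir_mx c Om)) l -> rayleigh_quotients l.
Proof.
move=> uOm; rewrite -char_poly_trmx -eigenvalue_root_char => /eigenvalueP [v vE vn0].
set n := size Om; set xs := tnth (in_tuple Om).
have xs_inj : injective xs by apply/tuple_uniqP.
pose f x := \sum_(j < n | xs j == x) v 0 j.
have fE j : f (xs j) = v 0 j.
  by rewrite /f (big_pred1 j) // => i /=; apply/eqP/eqP => [/xs_inj | ->].
have eig j : v 0 j - \sum_(i < n) transP c (xs j) (xs i) * v 0 i = l * v 0 j.
  have := congr1 (fun M : 'M[R]_(1, n) => M 0 j) vE; rewrite /= !mxE => <-.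
  under [RHS]eq_bigr do rewrite !mxE mulrBr.
  rewrite sumrB [in RHS](bigD1 j) //= eqxx mulr1 [X in _ + X - _]big1 ?addr0; last first.
    by move=> i; rewrite eq_sym => /negPf ->; rewrite mulr0.
  by congr (_ - _); apply: eq_bigr => i _; rewrite mulrC.
have den_gt0 : 0 < rq_den c Om f.
  have [j vj] : exists j, v 0 j != 0.
    apply/existsP; apply: contraR vn0; rewrite negb_exists => /forallP v0.
    by apply/eqP/rowP => j; rewrite mxE; apply/eqP; rewrite -[_ == _]negbK v0.
  rewrite /rq_den (big_tnth _ _ Om) (bigD1 j) //= -/xs ltr_pwDl //.
    by rewrite mulr_gt0 ?pi_w_gt0 // fE exprn_even_gt0.
  by apply: sumr_ge0 => i _; rewrite mulr_ge0 ?sqr_ge0 // ltW // pi_w_gt0.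
exists Om, f; split => //; apply/esym/(canLR (mulfK (lt0r_neq0 den_gt0))).
rewrite /rq_num /rq_den !(big_tnth _ _ Om) -/xs mulr_sumr; apply: eq_bigr => j _.
rewrite (big_tnth _ _ Om) -/xs (eq_bigr (fun i => transP c (xs j) (xs i) * v 0 i)).
  by rewrite fE eig; ring.
by move=> i _; rewrite fE.
Qed.

Lemma has_lbound_rayleigh_quotients : has_lbound rayleigh_quotients.
Proof. by exists 0 => _ [S [f [uS den_gt0 ->]]]; rewrite divr_ge0 ?rq_num_ge0 ?ltW. Qed.

Lemma lambda_min_le_root (Om : seq V) (l : R) : uniq Om ->
  root (char_poly (dir_mx c Om)) l -> lambda_min c <= l.
Proof.
move=> uOm rl; rewrite lambda_minE.
exact: ge_inf has_lbound_rayleigh_quotients _ (root_dir_rayleigh uOm rl).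
Qed.

Lemma char_poly_dir_mx2 x y : char_poly (dir_mx c [:: x; y]) =
  ('X - (1 - transP c x x)%:P) * ('X - (1 - transP c y y)%:P)
   - (transP c x y)%:P * (transP c y x)%:P.
Proof.
rewrite /char_poly (expand_det_row _ ord0) !big_ord_recl big_ord0 /cofactor.
rewrite !det_mx11 !mxE /= /bump /= !add0n addn0 expr0 expr1 mulr1n mulr0n.
by rewrite !sub0r !polyCN; ring.
Qed.

(* For [C < 0], Yang's inequality on [[:: x; y]] forces the two Dirichlet eigenvalues
   to coincide, i.e. the discriminant [(a - d)^2 + 4 q] to vanish. *)
Lemma yang_neg_pair (C : R) x y : C < 0 -> yang_type c C -> x != y ->
  c x y = 0 /\ transP c x x = transP c y y.
Proof.
move=> C0 Y xy.
set a := 1 - transP c x x; set d := 1 - transP c y y.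
set q := transP c x y * transP c y x.
have q0 : 0 <= q by rewrite mulr_ge0 ?transP_ge0.
have D0 : 0 <= (a - d) ^+ 2 + 4 * q by have := sqr_ge0 (a - d); lra.
set s := Num.sqrt ((a - d) ^+ 2 + 4 * q); have s0 : 0 <= s := sqrtr_ge0 _.
set r1 := (a + d - s) / 2; set r2 := (a + d + s) / 2.
have uxy : uniq [:: x; y] by rewrite /= inE xy.
have eigs : dirichlet_eigs c [:: x; y] [:: r1; r2].
  split; first by rewrite /= andbT /r1 /r2; lra.
  by rewrite char_poly_dir_mx2 -polyCM XsubC_mul_subC_factor // !big_cons big_nil mulr1.
have r1_min : lambda_min c <= r1.
  exact: lambda_min_le_root uxy (root_dirichlet_eigs (i := 0) eigs isT).
have := Y _ _ uxy eigs 1%N isT; rewrite !big_ord1 /=.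
have -> : r2 - r1 = s by rewrite /r1 /r2; field.
have -> : 1 - r1 = (transP c x x + transP c y y + s) / 2 by rewrite /r1 /a /d; field.
move=> yang12.
have rhs_le0 : C * (s * (r1 - lambda_min c)) <= 0.
  by apply: mulr_le0_ge0; [exact: ltW | rewrite mulr_ge0 // subr_ge0].
have s_eq0 : s = 0.
  apply/eqP; rewrite eq_le s0 andbT; apply: contraTT (le_trans yang12 rhs_le0).
  rewrite -!ltNge => s_gt0; have Pxx := transP_ge0 x x; have Pyy := transP_ge0 y y.
  by rewrite mulr_gt0 ?exprn_gt0 //; lra.
have disc0 : (a - d) ^+ 2 + 4 * q = 0 by rewrite -(sqr_sqrtr D0) -/s s_eq0 expr0n.
have sq0 : (a - d) ^+ 2 = 0 by have := sqr_ge0 (a - d); lra.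
have q_eq0 : q = 0 by have := sqr_ge0 (a - d); lra.
split.
  move/eqP: q_eq0; rewrite /q /transP (c_sym y x) !mulf_eq0 !invr_eq0.
  by rewrite !(gt_eqF (pi_w_gt0 _)) !orbF orbb => /eqP.
by move/eqP: sq0; rewrite sqrf_eq0 subr_eq0 /a /d => /eqP; lra.
Qed.

Lemma yang_neg_eig_eq_min (C : R) Om lam i : C < 0 -> yang_type c C ->
  uniq Om -> dirichlet_eigs c Om lam -> (i < size Om)%N -> lam`_i = lambda_min c.
Proof.
move=> C0 Y uOm eg iO; case E : Om iO => [//|x0 Om'] iO; rewrite -E in iO uOm eg.
set d := 1 - transP c x0 x0.
have P_diag x : transP c x x = 1 - d.
  rewrite /d opprB addrC subrK; have [->//|xx0] := eqVneq x x0.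
  by have [] := yang_neg_pair C0 Y xx0.
have rq_d r : rayleigh_quotients r -> r = d.
  move=> [S [f [uS den_gt0 ->]]]; apply: (canLR (mulfK (lt0r_neq0 den_gt0))).
  rewrite /rq_num /rq_den mulr_sumr !big_seq; apply: eq_bigr => x xS.
  rewrite (bigD1_seq x) //= big1_seq ?addr0 ?P_diag; first by ring.
  move=> y /andP[yx _]; have xy : x != y by rewrite eq_sym.
  by have [cxy0 _] := yang_neg_pair C0 Y xy; rewrite /transP cxy0 !mul0r.
have l_rq := root_dir_rayleigh uOm (root_dirichlet_eigs eg iO).
have d_rq : rayleigh_quotients d by rewrite -(rq_d _ l_rq).
rewrite (rq_d _ l_rq) lambda_minE; apply/le_anti/andP; split.
  by apply: lb_le_inf => [|r /rq_d ->]; first by exists d.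
exact: ge_inf has_lbound_rayleigh_quotients _ d_rq.
Qed.

End DirichletEigenvalues.

Theorem corollary5p6 (R : realType) (V : countType) (c : V -> V -> R) (C : R)
  (Om : seq V) (lam : seq R) (k : nat) (delta : R) :
  is_network c -> yang_type c C ->
  uniq Om -> dirichlet_eigs c Om lam ->
  (1 <= k)%N -> (k < size Om)%N ->
  0 < delta -> lam`_k.-1 <= 1 - delta ->
  lam`_k - lambda_min c
    <= (1 + C / delta) * ((k%:R : R) `^ ((C / delta) / 2)) * (lam`_0 - lambda_min c).
Proof.
move=> net Y uOm eg k1 kO d0 lam_k1.
have [C_lt0|C_ge0] := ltP C 0.
  rewrite !(yang_neg_eig_eq_min net C_lt0 Y uOm eg) ?subrr ?mulr0 //.
  exact: leq_ltn_trans kO.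
have O0 : (0 < size Om)%N by exact: leq_ltn_trans kO.
apply: (cheng_yang (mu := fun i => lam`_i - lambda_min c)) => //.
- by rewrite divr_ge0 // ltW.
- by rewrite subr_ge0 (lambda_min_le_root net uOm (root_dirichlet_eigs eg O0)).
- move=> i j /andP[ij jk]; rewrite lerD2r (dirichlet_eigs_ndecr eg ij) //.
  exact: leq_ltn_trans kO.
- move=> m mk; have shift i : lam`_m - lambda_min c - (lam`_i - lambda_min c) = lam`_m - lam`_i.
    by rewrite opprB addrA subrK.
  under eq_bigr do rewrite shift.
  under [X in _ <= _ * X]eq_bigr do rewrite shift.
  exact: yang_type_rec Y uOm eg kO d0 lam_k1 _ mk.
Qed.
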